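(* The Kudryashov–Sinelshchikov equation $$u_t+uu_x-(1+u)u_{xx}-u_x^2=0$$ is nonlinearly self-adjoint with the substitution $$\phi(t,x,u)=c_1\exp(-t-x)+c_2,$$ where $c_1,c_2$ are constants with $(c_1,c_2)\neq(0,0)$. It is not strictly self-adjoint.
   Context: For a differential equation $\mathfrak{F}[u]=0$ in independent variables $t,x$ and dependent variable $u$, introduce a new dependent variable $\nu=\nu(t,x)$. The formal Lagrangian is $\mathfrak{L}=\nu\mathfrak{F}$ and the adjoint is $\mathfrak{F}^*=\frac{\delta\mathfrak{L}}{\delta u}$, where $\frac{\delta}{\delta u}=\frac{\partial}{\partial u}-D_t\frac{\partial}{\partial u_t}-D_x\frac{\partial}{\partial u_x}+D_x^2\frac{\partial}{\partial u_{xx}}$ and $D_t,D_x$ are total derivatives. The equation is nonlinearly self-adjoint if there is a substitution $\nu=\phi(t,x,u)\neq 0$ (derivatives of $\nu$ replaced by total derivatives of $\phi$) such that $\mathfrak{F}^*|_{\nu=\phi}=\lambda\mathfrak{F}$ for some coefficient $\lambda=\lambda(t,x,u,\dots)$; it is strictly self-adjoint if this holds with $\phi=u$. *)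

From Stdlib Require Import Reals List.
From Coquelicot Require Import Coquelicot.
Open Scope R_scope.

Definition Dt (g : R -> R -> R) (t x : R) : R := Derive (fun s => g s x) t.
Definition Dx (g : R -> R -> R) (t x : R) : R := Derive (fun y => g t y) x.

Fixpoint pder (w : list bool) (g : R -> R -> R) : R -> R -> R :=
  match w with
  | nil => g
  | b :: w' => (if b then Dt else Dx) (pder w' g)
  end.

Definition smooth2 (g : R -> R -> R) : Prop :=
  forall (w : list bool) (t x : R),
    ex_derive (fun s => pder w g s x) t /\
    ex_derive (fun y => pder w g t y) x /\
    continuous (fun p : R * R => pder w g (fst p) (snd p)) (t, x).

Definition jet (u : R -> R -> R) (t x : R) : nat -> nat -> R :=
  fun i j => Nat.iter i Dt (Nat.iter j Dx u) t x.

(** A second-order differential function F(t,x,u,u_t,u_x,u_xx) is given as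
    a real function of these six jet coordinates. *)
Definition diff_fun := R -> R -> R -> R -> R -> R -> R.

Definition Feval (F : diff_fun) (u : R -> R -> R) (t x : R) : R :=
  F t x (u t x) (Dt u t x) (Dx u t x) (Dx (Dx u) t x).

Definition Lag (F : diff_fun) (nu t x u0 ut ux uxx : R) : R :=
  nu * F t x u0 ut ux uxx.

Definition dL_u (F : diff_fun) (u nu : R -> R -> R) (t x : R) : R :=
  Derive (fun y => Lag F (nu t x) t x y (Dt u t x) (Dx u t x) (Dx (Dx u) t x))
    (u t x).
Definition dL_ut (F : diff_fun) (u nu : R -> R -> R) (t x : R) : R :=
  Derive (fun y => Lag F (nu t x) t x (u t x) y (Dx u t x) (Dx (Dx u) t x))
    (Dt u t x).
Definition dL_ux (F : diff_fun) (u nu : R -> R -> R) (t x : R) : R :=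
  Derive (fun y => Lag F (nu t x) t x (u t x) (Dt u t x) y (Dx (Dx u) t x))
    (Dx u t x).
Definition dL_uxx (F : diff_fun) (u nu : R -> R -> R) (t x : R) : R :=
  Derive (fun y => Lag F (nu t x) t x (u t x) (Dt u t x) (Dx u t x) y)
    (Dx (Dx u) t x).

(** Adjoint F* = dL/du - D_t dL/du_t - D_x dL/du_x + D_x^2 dL/du_xx,
    evaluated along u(t,x), nu(t,x): total derivatives become partial
    derivatives of the composed functions of (t,x). *)
Definition adjoint (F : diff_fun) (u nu : R -> R -> R) (t x : R) : R :=
  dL_u F u nu t x
  - Dt (dL_ut F u nu) t x
  - Dx (dL_ux F u nu) t x
  + Dx (Dx (dL_uxx F u nu)) t x.

Definition self_adjoint_with (F : diff_fun) (phi : R -> R -> R -> R) : Prop :=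
  (exists t x w, phi t x w <> 0) /\
  exists lam : R -> R -> (nat -> nat -> R) -> R,
    forall u : R -> R -> R, smooth2 u ->
      forall t x : R,
        adjoint F u (fun t' x' => phi t' x' (u t' x')) t x
        = lam t x (jet u t x) * Feval F u t x.

Definition strictly_self_adjoint (F : diff_fun) : Prop :=
  self_adjoint_with F (fun _ _ w => w).

Definition KS : diff_fun :=
  fun _ _ u0 ut ux uxx => ut + u0 * ux - (1 + u0) * uxx - ux ^ 2.

(** Evaluated along any functions u(t,x) and nu(t,x), the adjoint of the equation is
      F* = - (nu_t + nu_xx) - u (nu_x + nu_xx).
    Since c1 exp(-t-x) + c2 solves nu_t + nu_xx = nu_x + nu_xx = 0, this substitution
    makes F* vanish identically, i.e. F* = 0 * F.  For the strict substitution nu = u,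
    take u = t + x: then F* = -1 - t - x and F = t + x, so at the origin F* = -1 is not
    a multiple of F = 0. *)
From Stdlib Require Import Reals Lra.
From Coquelicot Require Import Coquelicot.
Open Scope R_scope.

Lemma Dt_ext (f g : R -> R -> R) t x :
  (forall s, f s x = g s x) -> Dt f t x = Dt g t x.
Proof. intros H; unfold Dt; apply Derive_ext; auto. Qed.

Lemma Dx_ext (f g : R -> R -> R) t x :
  (forall y, f t y = g t y) -> Dx f t x = Dx g t x.
Proof. intros H; unfold Dx; apply Derive_ext; auto. Qed.

Ltac derive_closed_form :=
  apply is_derive_unique; auto_derive; [repeat split; auto | unfold Dt, Dx, Rminus; ring].

Lemma pder_affine a b c w : exists a' b' c', forall t x,
  pder w (fun t x => a * t + b * x + c) t x = a' * t + b' * x + c'.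
Proof.
  induction w as [|[|] w IH]; simpl.
  - exists a, b, c; reflexivity.
  - destruct IH as (a' & b' & c' & H).
    exists 0, 0, a'; intros t x.
    rewrite (Dt_ext _ (fun s y => a' * s + b' * y + c')) by auto.
    unfold Dt; derive_closed_form.
  - destruct IH as (a' & b' & c' & H).
    exists 0, 0, b'; intros t x.
    rewrite (Dx_ext _ (fun s y => a' * s + b' * y + c')) by auto.
    unfold Dx; derive_closed_form.
Qed.

Lemma continuous_affine2 a b c (p : R * R) :
  continuous (fun q : R * R => a * fst q + b * snd q + c) p.
Proof.
  destruct p as [t x].
  apply (@continuous_plus _ R_AbsRing R_NormedModule); [|apply continuous_const].
  apply (@continuous_plus _ R_AbsRing R_NormedModule).
  - apply (@continuous_mult _ R_AbsRing (fun _ => a));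
      [apply continuous_const | apply continuous_fst].
  - apply (@continuous_mult _ R_AbsRing (fun _ => b));
      [apply continuous_const | apply continuous_snd].
Qed.

Lemma smooth2_affine a b c : smooth2 (fun t x => a * t + b * x + c).
Proof.
  intros w t x. destruct (pder_affine a b c w) as (a' & b' & c' & H).
  split; [|split].
  - apply (ex_derive_ext (fun s => a' * s + b' * x + c')); [intros; now rewrite H|].
    auto_derive; auto.
  - apply (ex_derive_ext (fun y => a' * t + b' * y + c')); [intros; now rewrite H|].
    auto_derive; auto.
  - apply (continuous_ext (fun q : R * R => a' * fst q + b' * snd q + c'));
      [intros; now rewrite H | apply continuous_affine2].
Qed.

Lemma smooth2_ex_derive_Dx u : smooth2 u ->
  forall t y, ex_derive (fun y => u t y) y /\ ex_derive (fun y => Dx u t y) y.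
Proof. intros Hu t y; split; [apply (Hu nil) | apply (Hu (cons false nil))]. Qed.

Section KSAdjoint.

Variables u nu : R -> R -> R.

Lemma dL_u_KS t x : dL_u KS u nu t x = nu t x * (Dx u t x - Dx (Dx u) t x).
Proof. unfold dL_u, Lag, KS; derive_closed_form. Qed.

Lemma dL_ut_KS t x : dL_ut KS u nu t x = nu t x.
Proof. unfold dL_ut, Lag, KS; derive_closed_form. Qed.

Lemma dL_ux_KS t x : dL_ux KS u nu t x = nu t x * (u t x - 2 * Dx u t x).
Proof. unfold dL_ux, Lag, KS; derive_closed_form. Qed.

Lemma dL_uxx_KS t x : dL_uxx KS u nu t x = - (nu t x * (1 + u t x)).
Proof. unfold dL_uxx, Lag, KS; derive_closed_form. Qed.

Hypothesis u_Dx2 : forall t y, ex_derive (fun y => u t y) y /\ ex_derive (fun y => Dx u t y) y.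
Hypothesis nu_Dx2 : forall t y, ex_derive (fun y => nu t y) y /\ ex_derive (fun y => Dx nu t y) y.

Lemma Dx_dL_ux_KS t x : Dx (dL_ux KS u nu) t x =
  Dx nu t x * (u t x - 2 * Dx u t x) + nu t x * (Dx u t x - 2 * Dx (Dx u) t x).
Proof.
  destruct (u_Dx2 t x), (nu_Dx2 t x).
  rewrite (Dx_ext _ (fun t x => nu t x * (u t x - 2 * Dx u t x))) by (intros; apply dL_ux_KS).
  unfold Dx at 1; derive_closed_form.
Qed.

Lemma Dx_dL_uxx_KS t y : Dx (dL_uxx KS u nu) t y =
  - (Dx nu t y * (1 + u t y) + nu t y * Dx u t y).
Proof.
  destruct (u_Dx2 t y), (nu_Dx2 t y).
  rewrite (Dx_ext _ (fun t x => - (nu t x * (1 + u t x)))) by (intros; apply dL_uxx_KS).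
  unfold Dx at 1; derive_closed_form.
Qed.

Lemma Dxx_dL_uxx_KS t x : Dx (Dx (dL_uxx KS u nu)) t x =
  - (Dx (Dx nu) t x * (1 + u t x) + 2 * (Dx nu t x * Dx u t x) + nu t x * Dx (Dx u) t x).
Proof.
  destruct (u_Dx2 t x), (nu_Dx2 t x).
  rewrite (Dx_ext _ (fun t y => - (Dx nu t y * (1 + u t y) + nu t y * Dx u t y)))
    by (intros; apply Dx_dL_uxx_KS).
  unfold Dx at 1; derive_closed_form.
Qed.

Lemma adjoint_KS t x : adjoint KS u nu t x =
  - (Dt nu t x + Dx (Dx nu) t x) - u t x * (Dx nu t x + Dx (Dx nu) t x).
Proof.
  unfold adjoint.
  rewrite dL_u_KS, Dx_dL_ux_KS, Dxx_dL_uxx_KS.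
  rewrite (Dt_ext _ nu) by (intros; apply dL_ut_KS).
  ring.
Qed.

End KSAdjoint.

Definition exp_multiplier (c1 c2 : R) : R -> R -> R := fun t x => c1 * exp (- t - x) + c2.

Section ExpMultiplier.

Variables c1 c2 : R.

Lemma Dt_exp_multiplier t x : Dt (exp_multiplier c1 c2) t x = - (c1 * exp (- t - x)).
Proof. unfold Dt, exp_multiplier; derive_closed_form. Qed.

Lemma Dx_exp_multiplier t x : Dx (exp_multiplier c1 c2) t x = - (c1 * exp (- t - x)).
Proof. unfold Dx, exp_multiplier; derive_closed_form. Qed.

Lemma Dxx_exp_multiplier t x : Dx (Dx (exp_multiplier c1 c2)) t x = c1 * exp (- t - x).
Proof.
  rewrite (Dx_ext _ (fun t y => - (c1 * exp (- t - y)))) by (intros; apply Dx_exp_multiplier).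
  unfold Dx; derive_closed_form.
Qed.

Lemma exp_multiplier_ex_derive_Dx t y :
  ex_derive (fun y => exp_multiplier c1 c2 t y) y /\
  ex_derive (fun y => Dx (exp_multiplier c1 c2) t y) y.
Proof.
  split; [unfold exp_multiplier; auto_derive; auto |].
  apply (ex_derive_ext (fun y => - (c1 * exp (- t - y)))).
  - intros; symmetry; apply Dx_exp_multiplier.
  - auto_derive; auto.
Qed.

Lemma adjoint_KS_exp_multiplier u : smooth2 u ->
  forall t x, adjoint KS u (exp_multiplier c1 c2) t x = 0.
Proof.
  intros Hu t x.
  rewrite adjoint_KS by
    (exact (smooth2_ex_derive_Dx u Hu) || exact exp_multiplier_ex_derive_Dx).
  rewrite Dt_exp_multiplier, Dx_exp_multiplier, Dxx_exp_multiplier.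
  ring.
Qed.

Lemma exp_multiplier_neq0 : (c1, c2) <> (0, 0) -> exists t x, exp_multiplier c1 c2 t x <> 0.
Proof.
  unfold exp_multiplier; intros Hc.
  destruct (Req_dec (c1 + c2) 0) as [Hsum | Hsum].
  - assert (Hc1 : c1 <> 0) by (intros ->; apply Hc; f_equal; lra).
    assert (He : exp 0 < exp 1) by (apply exp_increasing; lra).
    rewrite exp_0 in He.
    exists (-1), 0.
    replace (- -1 - 0) with 1 by ring.
    replace c2 with (- c1) by lra.
    replace (c1 * exp 1 + - c1) with (c1 * (exp 1 - 1)) by ring.
    apply Rmult_integral_contrapositive; split; lra.
  - exists 0, 0.
    now replace (- 0 - 0) with 0 by ring; rewrite exp_0, Rmult_1_r.
Qed.

End ExpMultiplier.

Lemma KS_self_adjoint_with_exp c1 c2 : (c1, c2) <> (0, 0) ->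
  self_adjoint_with KS (fun t x _ => c1 * exp (- t - x) + c2).
Proof.
  intros Hc; split.
  - destruct (exp_multiplier_neq0 c1 c2 Hc) as (t & x & Hneq0).
    exists t, x, 0; exact Hneq0.
  - exists (fun _ _ _ => 0); intros u Hu t x.
    rewrite Rmult_0_l.
    exact (adjoint_KS_exp_multiplier c1 c2 u Hu t x).
Qed.

Section Affine.

Variables a b c : R.

Let affine : R -> R -> R := fun t x => a * t + b * x + c.

Lemma Dt_affine t x : Dt affine t x = a.
Proof. unfold Dt, affine; derive_closed_form. Qed.

Lemma Dx_affine t x : Dx affine t x = b.
Proof. unfold Dx, affine; derive_closed_form. Qed.

Lemma Dxx_affine t x : Dx (Dx affine) t x = 0.
Proof.
  rewrite (Dx_ext _ (fun _ _ => b)) by (intros; apply Dx_affine).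
  unfold Dx; derive_closed_form.
Qed.

Lemma adjoint_KS_affine_strict t x :
  adjoint KS affine affine t x = - a - affine t x * b.
Proof.
  assert (Hs := smooth2_ex_derive_Dx _ (smooth2_affine a b c)).
  rewrite adjoint_KS by apply Hs.
  rewrite Dt_affine, Dx_affine, Dxx_affine.
  ring.
Qed.

Lemma Feval_KS_affine t x : Feval KS affine t x = a + affine t x * b - b ^ 2.
Proof. unfold Feval, KS; rewrite Dt_affine, Dx_affine, Dxx_affine; ring. Qed.

End Affine.

Lemma KS_not_strictly_self_adjoint : ~ strictly_self_adjoint KS.
Proof.
  intros [_ [lam Hlam]].
  specialize (Hlam _ (smooth2_affine 1 1 0) 0 0).
  rewrite (adjoint_KS_affine_strict 1 1 0), (Feval_KS_affine 1 1 0) in Hlam.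
  lra.
Qed.

Theorem corollary3 :
  (forall c1 c2 : R, (c1, c2) <> (0, 0) ->
     self_adjoint_with KS (fun t x _ => c1 * exp (- t - x) + c2))
  /\ ~ strictly_self_adjoint KS.
Proof. split; [exact KS_self_adjoint_with_exp | exact KS_not_strictly_self_adjoint]. Qed.
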